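(* Let $d>1$ and let $C\subseteq\{0,1\}^n$ be a maximum class of VC-dimension $d$. Then for every set $I\subseteq[n]$ of $d-1$ colors, the boundary $\partial C$ contains at least two $(d-1)$-cubes whose set of colors is $I$.
   Context: $C\subseteq\{0,1\}^n$ is maximum of VC-dimension $d$ if its VC-dimension is $d$ and $|C|=\sum_{i=0}^d\binom{n}{i}$. A $k$-cube in $C$ with colors $I$ ($|I|=k$) is a set of $2^k$ points of $C$ that agree outside the coordinates $I$ and take all $2^k$ values on $I$. The boundary $\partial C$ of a $d$-maximum class $C$ is the set of all $(d-1)$-cubes in $C$ that are faces of exactly one $d$-cube in $C$. *)

From mathcomp Require Import all_boot.
Set Implicit Arguments. Unset Strict Implicit. Unset Printing Implicit Defensive.

Definition point (n : nat) := {ffun 'I_n -> bool}.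

Definition shatters n (C : {set point n}) (S : {set 'I_n}) : Prop :=
  forall T : {set 'I_n}, T \subset S ->
    exists2 c, c \in C & forall i, i \in S -> c i = (i \in T).

Definition vc_dim n (C : {set point n}) (d : nat) : Prop :=
  (exists2 S : {set 'I_n}, shatters C S & #|S| = d) /\
  (forall S : {set 'I_n}, shatters C S -> #|S| <= d).

Definition maximum_class n (C : {set point n}) (d : nat) : Prop :=
  vc_dim C d /\ #|C| = \sum_(i < d.+1) 'C(n, i).

Definition cube_set n (I : {set 'I_n}) (x : point n) : {set point n} :=
  [set y : point n | [forall i, (i \notin I) ==> (y i == x i)]].

Definition cube_in n (C : {set point n}) (I : {set 'I_n}) (Q : {set point n}) : bool :=
  [exists x, Q == cube_set I x] && (Q \subset C).

Definition cofaces n (C : {set point n}) (d : nat) (Q : {set point n}) :=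
  [set Q' : {set point n} |
     [exists J : {set 'I_n}, (#|J| == d) && cube_in C J Q'] && (Q \subset Q')].

Definition boundary_cube n (C : {set point n}) (d : nat) (I : {set 'I_n})
    (Q : {set point n}) : Prop :=
  #|I| = d.-1 /\ cube_in C I Q /\ #|cofaces C d Q| = 1.

From mathcomp Require Import all_boot zify.
Set Implicit Arguments. Unset Strict Implicit. Unset Printing Implicit Defensive.

(* For each j outside I a maximum class of VC-dimension d contains a
   cube with colors j |: I (the Sauer-Shelah count is tight, and the reductions C^x of a
   class meeting it still meet it), and only one (two of them would shatter a set of
   size d + 1). So in the graph whose vertices are the I-cubes of C, each (j |: I)-cube
   being an edge between its two I-faces, every direction j labels exactly one edge. A
   longest walk using each direction at most once cannot be prolonged at either end, so
   its end vertices lie in a single d-cube, i.e. on the boundary; they are distinct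
   because the first direction is flipped only once. *)

Section Cubes.
Variable n : nat.
Implicit Types (I J : {set 'I_n}) (x y v : point n) (s : seq 'I_n).

Lemma in_cube I x y :
  reflect (forall i, i \notin I -> y i = x i) (y \in cube_set I x).
Proof.
rewrite inE; apply: (iffP forallP) => H i.
  by move=> Hi; apply/eqP; move: (H i); rewrite Hi.
by apply/implyP => Hi; apply/eqP; apply: H.
Qed.

Lemma cube_self I x : x \in cube_set I x.
Proof. exact/in_cube. Qed.

Lemma cube_eq I x y : x \in cube_set I y -> cube_set I x = cube_set I y.
Proof.
move/in_cube=> Hx; apply/setP=> z; apply/in_cube/in_cube => Hz i Hi.
  by rewrite Hz // Hx.
by rewrite Hz // Hx.
Qed.

Lemma cube_sub I J x : I \subset J -> cube_set I x \subset cube_set J x.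
Proof.
move=> IJ; apply/subsetP=> y /in_cube Hy; apply/in_cube=> i Hi; apply: Hy.
by apply: contra Hi; apply: (subsetP IJ).
Qed.

Lemma cube_set0 x : cube_set set0 x = [set x].
Proof.
apply/setP=> y; rewrite in_set1; apply/in_cube/eqP => [Hy | -> //].
by apply/ffunP=> i; apply: Hy; rewrite inE.
Qed.

Definition flip (j : 'I_n) v : point n := [ffun i => (i == j) (+) v i].

Lemma flipK j : involutive (flip j).
Proof. by move=> v; apply/ffunP=> i; rewrite !ffunE addbA addbb. Qed.

Lemma flip_at j v : flip j v j = ~~ v j.
Proof. by rewrite ffunE eqxx. Qed.

Lemma cube_flip I j v : j \in I -> cube_set I (flip j v) = cube_set I v.
Proof.
move=> jI; apply: cube_eq; apply/in_cube => i iI; rewrite ffunE.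
by have /negbTE -> : i != j by apply: contraNneq iI => ->.
Qed.

Lemma cube_sub_colors I J x y : cube_set I x \subset cube_set J y -> I \subset J.
Proof.
move=> IJ; apply/subsetP=> i iI; apply/negPn/negP=> iJ.
have /in_cube/(_ i iJ) := subsetP IJ _ (cube_self I x).
have fx : flip i x \in cube_set I x by rewrite -(cube_flip _ iI) cube_self.
have /in_cube/(_ i iJ) := subsetP IJ _ fx.
by rewrite flip_at => <-; case: (x i).
Qed.

Fixpoint flips s v : point n := if s is j :: s' then flips s' (flip j v) else v.

Lemma flipsE s v c : flips s v c = odd (count_mem c s) (+) v c.
Proof.
elim: s v => [|j s IH] v //=.
by rewrite IH ffunE oddD addbA [c == j]eq_sym; case: (j == c); case: (odd _).
Qed.

Lemma flips_revK s v : flips (rev s) (flips s v) = v.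
Proof. by apply/ffunP=> c; rewrite !flipsE count_rev addbA addbb. Qed.

Lemma flips_in s v c : uniq s -> c \in s -> flips s v c = ~~ v c.
Proof. by move=> us cs; rewrite flipsE count_uniq_mem // cs. Qed.

End Cubes.

Section Shifting.
Variable n : nat.
Implicit Types (A J K S T : {set 'I_n}) (C : {set point n}) (x : 'I_n) (b : bool).
Implicit Types (c y z : point n).

Definition zero_at x c : point n := [ffun i => if i == x then false else c i].
Definition slice C x b := zero_at x @: [set c in C | c x == b].
(* [restr C x] and [reduct C x] are the restriction C - x and the reduction C^x of the
   literature, kept inside {0,1}^n by setting coordinate x to false. *)
Definition restr C x := slice C x false :|: slice C x true.
Definition reduct C x := slice C x false :&: slice C x true.
Definition supported A C := forall c, c \in C -> forall i, i \notin A -> c i = false.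

Lemma zero_at_x x c : zero_at x c x = false.
Proof. by rewrite ffunE eqxx. Qed.

Lemma zero_at_ne x c i : i != x -> zero_at x c i = c i.
Proof. by rewrite ffunE => /negbTE ->. Qed.

Lemma zero_at_inj x c c' : c x = c' x -> zero_at x c = zero_at x c' -> c = c'.
Proof.
move=> Hx /ffunP H; apply/ffunP=> i; have := H i; rewrite !ffunE.
by case: eqP => // ->.
Qed.

Lemma sliceP C x b z :
  reflect (exists2 c, c \in C & c x = b /\ z = zero_at x c) (z \in slice C x b).
Proof.
apply: (iffP imsetP) => [[c] | [c Hc [cx ->]]].
  by rewrite inE => /andP[Hc /eqP cx] ->; exists c.
by exists c => //; rewrite inE Hc cx eqxx.
Qed.

Lemma mem_slice_zero_at C x c : (zero_at x c \in slice C x (c x)) = (c \in C).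
Proof.
apply/sliceP/idP => [[c' Hc' [cx /zero_at_inj E]] | Hc]; last by exists c.
by rewrite E.
Qed.

Lemma card_slice C x b : #|slice C x b| = #|[set c in C | c x == b]|.
Proof.
apply: (card_in_imset (f := zero_at x)) => c c'.
rewrite !inE => /andP[_ /eqP cx] /andP[_ /eqP c'x].
by apply: zero_at_inj; rewrite cx c'x.
Qed.

Lemma card_restr_reduct C x : #|C| = #|restr C x| + #|reduct C x|.
Proof.
rewrite cardsUI !card_slice -(cardsID [set c : point n | c x] C) addnC.
by congr (_ + _); apply: eq_card => c; rewrite !inE; case: (c x); rewrite ?andbF ?andbT.
Qed.

Lemma restrP C x z : z \in restr C x -> exists2 c, c \in C & z = zero_at x c.
Proof. by rewrite inE => /orP[] /sliceP[c Hc [_ ->]]; exists c. Qed.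

Lemma reduct_sub_restr C x : reduct C x \subset restr C x.
Proof. exact: subset_trans (subsetIl _ _) (subsetUl _ _). Qed.

Lemma supported_restr A C x : supported A C -> supported (A :\ x) (restr C x).
Proof.
move=> suppC z /restrP[c Hc ->] i; rewrite in_setD1 negb_and negbK.
case: (eqVneq i x) => [-> _ | ix /= iA]; first exact: zero_at_x.
by rewrite zero_at_ne // suppC.
Qed.

Lemma supported_reduct A C x : supported A C -> supported (A :\ x) (reduct C x).
Proof.
move=> /(supported_restr (x := x)) suppR c /(subsetP (reduct_sub_restr C x)).
exact: suppR.
Qed.

Lemma shatters_notin C x S :
  (forall c, c \in C -> c x = false) -> shatters C S -> x \notin S.
Proof.
move=> Cx shS; apply/negP=> xS; have [c Hc /(_ x xS)] := shS S (subxx S).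
by rewrite Cx // xS.
Qed.

Lemma restr_x C x c : c \in restr C x -> c x = false.
Proof. by case/restrP=> c' _ ->; apply: zero_at_x. Qed.

Lemma shatters_restr C x S : shatters (restr C x) S -> shatters C S.
Proof.
move=> shS; have xS := shatters_notin (@restr_x C x) shS.
move=> T TS; have [_ /restrP[c Hc ->] Hz] := shS T TS.
by exists c => // i iS; rewrite -(Hz i iS) zero_at_ne //; apply: contraNneq xS => <-.
Qed.

Lemma shatters_reduct C x S :
  shatters (reduct C x) S -> x \notin S /\ shatters C (x |: S).
Proof.
move=> shS.
have xS : x \notin S.
  by apply: shatters_notin shS => c /(subsetP (reduct_sub_restr C x)) /restr_x.
split=> // T TS.
have [|z] := shS (T :\ x).
  by apply/subsetP=> i; rewrite !inE => /andP[ix /(subsetP TS)]; rewrite !inE (negbTE ix).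
rewrite inE => /andP[/sliceP[c0 H0 [c0x E0]] /sliceP[c1 H1 [c1x E1]]] Hz.
exists (if x \in T then c1 else c0); first by case: ifP.
move=> i; rewrite in_setU1 => /orP[/eqP -> | iS].
  by case: (x \in T); rewrite ?c0x ?c1x.
have ix : i != x by apply: contraNneq xS => <-.
have := Hz i iS; rewrite in_setD1 ix /= => <-.
by case: ifP => _; [rewrite E1 | rewrite E0]; rewrite zero_at_ne.
Qed.

Lemma cube_of_reduct C x K y :
  x \notin K -> cube_set K y \subset reduct C x -> cube_set (x |: K) y \subset C.
Proof.
move=> xK Ky; have yx : y x = false.
  by apply: (@restr_x C); apply/(subsetP (reduct_sub_restr C x))/(subsetP Ky)/cube_self.
apply/subsetP=> w /in_cube Hw.
have : zero_at x w \in reduct C x.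
  apply: (subsetP Ky); apply/in_cube=> i iK.
  case: (eqVneq i x) => [-> | ix]; first by rewrite zero_at_x yx.
  by rewrite zero_at_ne // Hw // in_setU1 negb_or ix.
by rewrite inE -!(mem_slice_zero_at C x w); case: (w x) => /andP[].
Qed.

Definition binom_sum k m := \sum_(i < k) 'C(m, i).

Lemma binom_sumS k m : binom_sum k.+1 m.+1 = binom_sum k.+1 m + binom_sum k m.
Proof.
rewrite /binom_sum !big_ord_recl !bin0 -addnA; congr (_ + _).
by rewrite -big_split; apply: eq_bigr => i _; rewrite /bump /= binS.
Qed.

Lemma binom_sum_0 k : binom_sum k.+1 0 = 1.
Proof. by rewrite /binom_sum big_ord_recl bin0 big1. Qed.

Lemma binom_sum1 m : binom_sum 1 m = 1.
Proof. by rewrite /binom_sum big_ord1 bin0. Qed.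

Lemma shatters_set0 C c : c \in C -> shatters C set0.
Proof. by move=> Hc T _; exists c => // i; rewrite inE. Qed.

Lemma sauer_shelah (m k : nat) A C : #|A| = m -> supported A C ->
  (forall S, shatters C S -> #|S| != k) -> #|C| <= binom_sum k m.
Proof.
elim: m k A C => [|m IH] [|k] A C cA suppC noS.
- case: (set_0Vmem C) => [-> | [c /shatters_set0 /noS]]; first by rewrite cards0.
  by rewrite cards0.
- have A0 : A = set0 by apply/eqP; rewrite -cards_eq0 cA.
  rewrite binom_sum_0 -(cards1 ([ffun=> false] : point n)).
  apply/subset_leq_card/subsetP=> c Hc.
  by rewrite in_set1; apply/eqP/ffunP=> i; rewrite ffunE suppC // A0 inE.
- case: (set_0Vmem C) => [-> | [c /shatters_set0 /noS]]; first by rewrite cards0.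
  by rewrite cards0.
- have [x xA] : exists x, x \in A by apply/card_gt0P; rewrite cA.
  have cAx : #|A :\ x| = m by move: cA; rewrite (cardsD1 x A) xA add1n => -[].
  rewrite (card_restr_reduct C x) binom_sumS leq_add //.
    apply: (IH k.+1 (A :\ x)) => //; first exact: supported_restr.
    by move=> S /shatters_restr; apply: noS.
  apply: (IH k (A :\ x)) => //; first exact: supported_reduct.
  by move=> S /shatters_reduct [xS /noS]; rewrite cardsU1 xS.
Qed.

Lemma exists_cube (j : nat) A J C : supported A C ->
  (forall S, shatters C S -> #|S| != j.+1) -> binom_sum j.+1 #|A| <= #|C| ->
  J \subset A -> #|J| = j -> exists y, cube_set J y \subset C.
Proof.
elim: j A J C => [|j IH] A J C suppC noS cardC JA cJ.
  have -> : J = set0 by apply/eqP; rewrite -cards_eq0 cJ.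
  move: cardC; rewrite binom_sum1 => /card_gt0P[c Hc].
  by exists c; rewrite cube_set0 sub1set.
have [x xJ] : exists x, x \in J by apply/card_gt0P; rewrite cJ.
have cA : #|A| = #|A :\ x|.+1 by rewrite (cardsD1 x A) (subsetP JA x xJ).
have [y Hy] : exists y, cube_set (J :\ x) y \subset reduct C x.
  apply: (IH (A :\ x)).
  - exact: supported_reduct.
  - by move=> S /shatters_reduct [xS /noS]; rewrite cardsU1 xS.
  - rewrite -(leq_add2l (binom_sum j.+2 #|A :\ x|)) -binom_sumS -cA.
    apply: leq_trans cardC _; rewrite (card_restr_reduct C x) leq_add2r.
    apply: sauer_shelah erefl (supported_restr (x := x) suppC) _.
    by move=> S /shatters_restr; apply: noS.
  - exact: setSD.
  - by move: cJ; rewrite (cardsD1 x J) xJ add1n => -[].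
exists y; rewrite -(setD1K xJ); apply: cube_of_reduct Hy.
by rewrite !inE eqxx.
Qed.

End Shifting.

Lemma cube_unique n (C : {set point n}) (d : nat) (J : {set 'I_n}) (y y' : point n) :
  (forall S, shatters C S -> #|S| <= d) -> #|J| = d ->
  cube_set J y \subset C -> cube_set J y' \subset C -> y' \in cube_set J y.
Proof.
move=> vcC cJ Cy Cy'; apply/in_cube=> k kJ; apply/eqP/negPn/negP=> neq_k.
suff : #|k |: J| <= d by rewrite cardsU1 kJ cJ ltnn.
apply: vcC => T _.
pose z := if y k == (k \in T) then y else y'.
have zk : z k = (k \in T).
  rewrite /z; case: eqP => // /eqP.
  by move: neq_k; case: (y k); case: (k \in T); case: (y' k).
have Cz : cube_set J z \subset C by rewrite /z; case: ifP.
exists [ffun i => if i \in J then i \in T else z i].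
  by apply: (subsetP Cz); apply/in_cube=> i iJ; rewrite ffunE (negbTE iJ).
move=> i; rewrite in_setU1 ffunE => /orP[/eqP -> | -> //].
by rewrite (negbTE kJ).
Qed.

Lemma subset_card_succ (T : finType) (I J : {set T}) :
  I \subset J -> #|J| = #|I|.+1 -> exists2 j, j \notin I & J = j |: I.
Proof.
move=> IJ cJ; have : #|J :\: I| == 1 by rewrite cardsD (setIidPr IJ) cJ subSnn.
case/cards1P=> j EJ; have : j \in J :\: I by rewrite EJ set11.
rewrite inE => /andP[jI _]; exists j => //.
by rewrite -(setID J I) (setIidPr IJ) EJ setUC.
Qed.

Section BoundaryWalks.
Variables (n d : nat) (C : {set point n}) (I : {set 'I_n}).
Hypothesis vcC : forall S, shatters C S -> #|S| <= d.
Hypothesis d_gt0 : 0 < d.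
Hypothesis cardI : #|I| = d.-1.
Implicit Types (j : 'I_n) (v w x : point n) (s : seq 'I_n).

Definition edge j v := cube_set (j |: I) v \subset C.

Fixpoint cube_walk v s :=
  if s is j :: s' then edge j v && cube_walk (flip j v) s' else true.

Definition simple_walk v s := [&& uniq s, all (fun j => j \notin I) s & cube_walk v s].

Definition longest_walk k := forall v s, simple_walk v s -> size s <= k.

Lemma card_colorsU1 j : j \notin I -> #|j |: I| = d.
Proof. by move=> jI; rewrite cardsU1 jI cardI add1n prednK. Qed.

Lemma edge_flip j v : edge j (flip j v) = edge j v.
Proof. by rewrite /edge cube_flip ?setU11. Qed.

Lemma edge_unique j v w : j \notin I -> edge j v -> edge j w -> w \in cube_set (j |: I) v.
Proof. by move=> jI; apply: cube_unique vcC (card_colorsU1 jI). Qed.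

Lemma cube_walk_cat v s1 s2 :
  cube_walk v (s1 ++ s2) = cube_walk v s1 && cube_walk (flips s1 v) s2.
Proof. by elim: s1 v => //= j s1 IH v; rewrite IH andbA. Qed.

Lemma cube_walk_rev v s : cube_walk (flips s v) (rev s) = cube_walk v s.
Proof.
elim: s v => //= j s IH v.
by rewrite rev_cons -cats1 cube_walk_cat IH flips_revK /= edge_flip andbT andbC.
Qed.

Lemma simple_walk_rev v s : simple_walk (flips s v) (rev s) = simple_walk v s.
Proof. by rewrite /simple_walk rev_uniq all_rev cube_walk_rev. Qed.

Lemma simple_walk_ends_neq v s :
  simple_walk v s -> s != [::] -> cube_set I v != cube_set I (flips s v).
Proof.
case: s => [//|j s] /and3P[us /andP[jI _] _] _; apply/eqP=> E.
have /in_cube/(_ j jI) : flips (j :: s) v \in cube_set I v by rewrite E cube_self.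
by rewrite flips_in ?mem_head //; case: (v j).
Qed.

Lemma exists_longest_walk v0 s0 :
  simple_walk v0 s0 -> exists v s, simple_walk v s /\ longest_walk (size s).
Proof.
move=> w0; pose P k := [exists v, exists t : k.-tuple 'I_n, simple_walk v t].
have P0 : P (size s0) by apply/existsP; exists v0; apply/existsP; exists (in_tuple s0).
have P_le k : P k -> k <= n.
  case/existsP=> v /existsP[t /and3P[ut _ _]].
  rewrite -(size_tuple t) -(card_uniqP ut).
  by apply: leq_trans (max_card _) _; rewrite card_ord.
have [k /existsP[v /existsP[t wt]] kmax] := ex_maxnP (ex_intro P _ P0) P_le.
exists v, t; split; rewrite // size_tuple => v' s' w'; apply: kmax.
by apply/existsP; exists v'; apply/existsP; exists (in_tuple s').
Qed.

(* A new direction would extend the walk; a used direction j is, by uniqueness of the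
   (j |: I)-cube, the step of the walk labelled j, so v would agree with a later vertex
   at the coordinate flipped first. *)
Lemma longest_walk_head v s j : simple_walk v s -> longest_walk (size s) ->
  j \notin I -> edge j v -> j = head j s.
Proof.
case/and3P=> us sI ws long jI ej.
have [js | jNs] := boolP (j \in s); last first.
  have : simple_walk (flip j v) (j :: s).
    by rewrite /simple_walk /= jNs us jI sI edge_flip ej flipK ws.
  by move/long; rewrite ltnn.
move: us sI ws; case/splitPr: js => [[//|c p1] p2] us sI ws.
have ej' : edge j (flips (c :: p1) v).
  by move: ws; rewrite cube_walk_cat => /andP[_ /andP[]].
have cI : c \notin I by case/andP: sI.
have uc : uniq (c :: p1) by move: us; rewrite cat_uniq => /andP[].
have cj : c != j by apply: contraTneq us => ->; rewrite /= mem_cat mem_head orbT.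
move/in_cube: (edge_unique jI ej' ej) => /(_ c).
by rewrite in_setU1 negb_or cj cI flips_in ?mem_head // => /(_ isT); case: (v c).
Qed.

Lemma boundary_of_unique_edge x j0 : j0 \notin I -> edge j0 x ->
  (forall j, j \notin I -> edge j x -> j = j0) -> boundary_cube C d I (cube_set I x).
Proof.
move=> j0I e0 only_j0; split=> //; split.
  apply/andP; split; first by apply/existsP; exists x.
  exact: subset_trans (cube_sub x (subsetU1 j0 I)) e0.
suff -> : cofaces C d (cube_set I x) = [set cube_set (j0 |: I) x] by rewrite cards1.
apply/setP=> Q; rewrite !inE; apply/idP/eqP => [|->].
  case/andP=> /existsP[J /andP[/eqP cJ /andP[/existsP[y /eqP ->] JC]]] IJ.
  rewrite -(cube_eq (subsetP IJ _ (cube_self I x))) in JC *.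
  have [j jI EJ] : exists2 j, j \notin I & J = j |: I.
    by apply: subset_card_succ (cube_sub_colors IJ) _; rewrite cJ cardI prednK.
  by rewrite EJ in JC *; rewrite (only_j0 j jI JC).
apply/andP; split; last exact: cube_sub (subsetU1 j0 I).
apply/existsP; exists (j0 |: I); rewrite card_colorsU1 // eqxx /=.
by apply/andP; split=> //; apply/existsP; exists x.
Qed.

Lemma longest_walk_boundary v s : simple_walk v s -> longest_walk (size s) ->
  s != [::] -> boundary_cube C d I (cube_set I v).
Proof.
case: s => [//|j1 s] w long _; have /and3P[_ /andP[j1I _] /andP[e1 _]] := w.
apply: (boundary_of_unique_edge j1I e1) => j jI ej.
exact: longest_walk_head w long jI ej.
Qed.

Lemma longest_walk_boundary_end v s : simple_walk v s -> longest_walk (size s) ->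
  s != [::] -> boundary_cube C d I (cube_set I (flips s v)).
Proof.
move=> w long s_nil; apply: (longest_walk_boundary (s := rev s)).
- by rewrite simple_walk_rev.
- by rewrite size_rev.
- by rewrite -size_eq0 size_rev size_eq0.
Qed.

End BoundaryWalks.

Theorem theorem2 (n d : nat) (C : {set point n}) :
  1 < d -> maximum_class C d ->
  forall I : {set 'I_n}, #|I| = d.-1 ->
    exists Q1 Q2 : {set point n},
      [/\ Q1 != Q2, boundary_cube C d I Q1 & boundary_cube C d I Q2].
Proof.
move=> d_gt1 [[[S0 _ cardS0] vcC] cardC] I cardI.
have d_gt0 : 0 < d := ltnW d_gt1.
have /properP[_ [j0 _ j0I]] : I \proper setT.
  rewrite properEcard subsetT cardsT card_ord cardI.
  by have := max_card S0; rewrite cardS0 card_ord; lia.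
have [y ey] : exists y, cube_set (j0 |: I) y \subset C.
  apply: (exists_cube (j := d) (A := setT)) => [c _ i | S /vcC | | |].
  - by rewrite inE.
  - by move=> le_Sd; rewrite neq_ltn ltnS le_Sd.
  - by rewrite cardsT card_ord cardC.
  - exact: subsetT.
  - exact: card_colorsU1.
have w0 : simple_walk C I y [:: j0] by rewrite /simple_walk /= j0I /edge ey.
have [v [s [ws long]]] := exists_longest_walk w0.
have s_nil : s != [::] by rewrite -size_eq0 -lt0n (long _ _ w0).
exists (cube_set I v), (cube_set I (flips s v)); split.
- exact: simple_walk_ends_neq ws s_nil.
- exact: (longest_walk_boundary vcC d_gt0 cardI ws long s_nil).
- exact: (longest_walk_boundary_end vcC d_gt0 cardI ws long s_nil).
Qed.
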